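(* Let $(\mathcal{X},\mathcal{T})$ be a partially monotone system of order $N\geq2$ as in the context, where each $(X_i,\leq_i)$ is a bi-directed partially ordered set and $d_i$ is a complete metric on $X_i$. Assume there exists $\varphi\in\Phi$ such that $$d_i\big(T_i(x),T_i(y)\big)\leq\varphi\Big(\max_{1\le j\le N}d_j(x_j,y_j)\Big)\quad\text{for all }i\in\{1,\ldots,N\}\text{ and all }x,y\in X\text{ with }x\preccurlyeq_i y.$$ Assume also that either (d1) each $T_i$ is continuous (with respect to the product topology on $X$), or (d2) for every $i$, every nondecreasing convergent sequence in $X_i$ is bounded from above by its limit and every nonincreasing convergent sequence in $X_i$ is bounded from below by its limit. If there exist $x^0,y^0\in X$ such that $$x^0_i\leq_i T_i(\sigma_i(x^0,y^0))\quad\text{and}\quad y^0_i\geq_i T_i(\sigma_i(y^0,x^0))\quad\text{for all }i\in\{1,\ldots,N\},$$ then the system $x_i=T_i(x_1,\ldots,x_N)$, $i=1,\ldots,N$, has a unique solution $x^\ast\in X$. Moreover, for every $u^0,v^0\in X$, the sequences $(u^n),(v^n)$ in $X$ defined by $$u^{n+1}_i=T_i(\sigma_i(u^n,v^n)),\qquad v^{n+1}_i=T_i(\sigma_i(v^n,u^n))\qquad(i=1,\ldots,N,\ n\geq0)$$ satisfy $u^n_i\to x^\ast_i$ and $v^n_i\to x^\ast_i$ as $n\to\infty$ for all $i$.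
   Context: Let $N\geq2$ and let $(X_i,\leq_i)$, $i=1,\ldots,N$, be quasi-ordered sets. Let $X=X_1\times\cdots\times X_N$, with components $x=(x_1,\ldots,x_N)$. Let $T_i:X\to X_i$, $i=1,\dots,N$. The system is partially monotone if for each pair $(i,j)$ a type $\epsilon_{i,j}\in\{+,-\}$ is fixed such that $T_i$ is nondecreasing in its $j$-th variable (all other variables fixed) when $\epsilon_{i,j}=+$ and nonincreasing in its $j$-th variable when $\epsilon_{i,j}=-$ (if $T_i$ is constant in the $j$-th variable either type may be chosen, but once fixed it is used consistently). For each $i$ define $\sigma_i=(\sigma_{i,1},\ldots,\sigma_{i,N}):X^2\to X$ by $\sigma_{i,j}(x,y)=x_j$ if $\epsilon_{i,j}=+$ and $\sigma_{i,j}(x,y)=y_j$ if $\epsilon_{i,j}=-$. The quasi-order $\preccurlyeq_i$ on $X$ is: $x\preccurlyeq_i y$ iff for all $j$, $x_j\leq_j y_j$ when $\epsilon_{i,j}=+$ and $x_j\geq_j y_j$ when $\epsilon_{i,j}=-$. A quasi-ordered set is bi-directed if every two-element subset has both a lower bound and an upper bound. $\Phi$ is the set of nondecreasing functions $\varphi:[0,\infty)\to[0,\infty)$ with $\varphi^n(t)\to0$ as $n\to\infty$ for every $t\geq0$ ($\varphi^n$ the $n$-th iterate). *)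

From mathcomp Require Import ssreflect ssrfun ssrbool eqtype ssrnat seq choice fintype.
From Stdlib Require Import Reals.
Set Implicit Arguments.
Unset Strict Implicit.

Local Open Scope R_scope.

Definition is_partial_order (A : Type) (le : A -> A -> Prop) : Prop :=
  (forall x, le x x) /\
  (forall x y z, le x y -> le y z -> le x z) /\
  (forall x y, le x y -> le y x -> x = y).

Definition bi_directed (A : Type) (le : A -> A -> Prop) : Prop :=
  forall x y : A, (exists l, le l x /\ le l y) /\ (exists u, le x u /\ le y u).

Definition is_metric (A : Type) (d : A -> A -> R) : Prop :=
  (forall x y, 0 <= d x y) /\
  (forall x y, d x y = 0 <-> x = y) /\
  (forall x y, d x y = d y x) /\
  (forall x y z, d x z <= d x y + d y z).

Definition mconv (A : Type) (d : A -> A -> R) (s : nat -> A) (l : A) : Prop :=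
  forall eps, 0 < eps -> exists M : nat, forall n : nat, (M <= n)%nat -> d (s n) l < eps.

Definition mcauchy (A : Type) (d : A -> A -> R) (s : nat -> A) : Prop :=
  forall eps, 0 < eps -> exists M : nat, forall m n : nat,
      (M <= m)%nat -> (M <= n)%nat -> d (s m) (s n) < eps.

Definition mcomplete (A : Type) (d : A -> A -> R) : Prop :=
  forall s : nat -> A, mcauchy d s -> exists l, mconv d s l.

Definition in_Phi (phi : R -> R) : Prop :=
  (forall t, 0 <= t -> 0 <= phi t) /\
  (forall s t, 0 <= s -> s <= t -> phi s <= phi t) /\
  (forall t, 0 <= t -> Un_cv (fun n => Nat.iter n phi t) 0).

Section System.
Variable N : nat.
Variable X : 'I_N -> Type.

Definition prodX := forall j : 'I_N, X j.

(** eps i j = true means type '+', false means type '-' *)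
Definition partially_monotone (le : forall i, X i -> X i -> Prop)
  (T : forall i, prodX -> X i) (eps : 'I_N -> 'I_N -> bool) : Prop :=
  forall (i j : 'I_N) (x y : prodX),
    (forall k, k <> j -> x k = y k) ->
    le j (x j) (y j) ->
    if eps i j then le i (T i x) (T i y) else le i (T i y) (T i x).

Definition sigmaS (eps : 'I_N -> 'I_N -> bool) (i : 'I_N) (x y : prodX) : prodX :=
  fun j => if eps i j then x j else y j.

Definition prec (le : forall i, X i -> X i -> Prop) (eps : 'I_N -> 'I_N -> bool)
  (i : 'I_N) (x y : prodX) : Prop :=
  forall j, if eps i j then le j (x j) (y j) else le j (y j) (x j).

Definition dmax (d : forall i, X i -> X i -> R) (x y : prodX) : R :=
  foldr Rmax 0 (map (fun j => d j (x j) (y j)) (enum 'I_N)).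

Definition prod_continuous (d : forall i, X i -> X i -> R) (i : 'I_N)
  (F : prodX -> X i) : Prop :=
  forall (x : prodX) (e : R), 0 < e -> exists delta, 0 < delta /\
    forall y : prodX, (forall j, d j (x j) (y j) < delta) -> d i (F x) (F y) < e.

Definition uv_seq (T : forall i, prodX -> X i) (eps : 'I_N -> 'I_N -> bool)
  (u0 v0 : prodX) (n : nat) : prodX * prodX :=
  Nat.iter n (fun p : prodX * prodX =>
     (fun i => T i (sigmaS eps i p.1 p.2), fun i => T i (sigmaS eps i p.2 p.1)))
    (u0, v0).

End System.

From mathcomp Require Import ssreflect ssrfun ssrbool eqtype ssrnat seq choice fintype.
From Stdlib Require Import Reals Lra ClassicalEpsilon FunctionalExtensionality.
Set Implicit Arguments. Unset Strict Implicit.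
Local Open Scope R_scope.

(* The system x_i = T_i(x) is turned into a single fixed-point problem on
   pairs p = (u, v) in X * X for the coupled operator
       G(u, v) = ((T_i(sigma_i(u, v)))_i, (T_i(sigma_i(v, u)))_i),
   whose orbits are exactly the sequences (u^n, v^n) of the statement.
   Pairs are ordered by "u grows and v shrinks" and measured by the maximum
   of all coordinate distances.  In that setting G is monotone and a
   phi-contraction on comparable pairs (an [ordered_contraction]).

   The coupled operator is then shown to satisfy these
   hypotheses, with (d1) and (d2) each making G pass to the limit.  Finally,
   if (u, v) is the fixed point then so is (v, u), hence u = v, and u is the
   unique solution, attracting both components of every coupled iteration. *)

Lemma dep_choice (I : Type) (A : I -> Type) (P : forall i, A i -> Prop) :
  (forall i, exists a, P i a) -> exists f : forall i, A i, forall i, P i (f i).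
Proof.
move=> H; exists (fun i => proj1_sig (constructive_indefinite_description _ (H i))).
move=> i; exact: proj2_sig (constructive_indefinite_description _ (H i)).
Qed.

Lemma eventually_all (I : finType) (P : I -> nat -> Prop) :
  (forall i, exists M : nat, forall n, (M <= n)%nat -> P i n) ->
  exists M : nat, forall i n, (M <= n)%nat -> P i n.
Proof.
move=> H.
suff [M HM] : exists M : nat, forall i n, i \in enum I -> (M <= n)%nat -> P i n.
  by exists M => i n; apply: HM; rewrite mem_enum.
elim: (enum I) => [|a s [M HM]]; first by exists 0%nat.
have [Ma HMa] := H a.
exists (maxn Ma M) => i n; rewrite in_cons => /orP [/eqP -> | hi] hn.
- by apply: HMa; apply: leq_trans (leq_maxl _ _) hn.
- by apply: HM hi _; apply: leq_trans (leq_maxr _ _) hn.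
Qed.

Lemma le_eps (a b : R) : (forall e, 0 < e -> a <= b + e) -> a <= b.
Proof.
move=> H; case: (Rle_lt_dec a b) => [//|h].
have := H ((a - b) / 2) ltac:(lra); lra.
Qed.

Section PhiFacts.
Variable phi : R -> R.
Hypothesis Hphi : in_Phi phi.

Lemma phi_ge0 t : 0 <= t -> 0 <= phi t.
Proof. by case: Hphi => h _; apply: h. Qed.

Lemma phi_mono s t : 0 <= s -> s <= t -> phi s <= phi t.
Proof. by case: Hphi => _ [h _]; apply: h. Qed.

Lemma iter_phi_ge0 n t : 0 <= t -> 0 <= Nat.iter n phi t.
Proof. by move=> ht; elim: n => [|n IH] //=; apply: phi_ge0. Qed.

Lemma iter_phi_small t e : 0 <= t -> 0 < e ->
  exists M : nat, forall n, (M <= n)%nat -> Nat.iter n phi t < e.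
Proof.
move=> ht he; case: Hphi => _ [_ Hcv]; have [M HM] := Hcv t ht e he.
exists M => n /leP hn; have := HM n hn.
by rewrite /R_dist Rminus_0_r Rabs_pos_eq //; apply: iter_phi_ge0.
Qed.

(* phi(t) < t for t > 0: otherwise all iterates phi^n(t) would stay >= t. *)
Lemma phi_lt t : 0 < t -> phi t < t.
Proof.
move=> ht; case: (Rlt_le_dec (phi t) t) => [//|hge].
have Hstay : forall n, t <= Nat.iter n phi t.
  elim=> [|n IH] /=; first lra.
  by apply: Rle_trans hge _; apply: phi_mono => //; lra.
have [M HM] := iter_phi_small (Rlt_le _ _ ht) ht.
have := HM M (leqnn M); have := Hstay M; lra.
Qed.

(* Hence phi(t) <= t for all t >= 0, using monotonicity at t = 0. *)
Lemma phi_le t : 0 <= t -> phi t <= t.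
Proof.
move=> ht; case: (Rle_lt_or_eq_dec _ _ ht) => [hpos|<-].
  by apply: Rlt_le; apply: phi_lt.
apply: le_eps => e he; have := phi_mono (Rle_refl 0) (Rlt_le _ _ he).
have := phi_lt he; lra.
Qed.

End PhiFacts.

Section MetricFacts.
Variables (A : Type) (dA : A -> A -> R).
Hypothesis HdA : is_metric dA.

Lemma dist_ge0 a b : 0 <= dA a b.
Proof. by case: HdA. Qed.

Lemma dist_sym a b : dA a b = dA b a.
Proof. by case: HdA => _ [_ [h _]]. Qed.

Lemma dist_tri a b c : dA a c <= dA a b + dA b c.
Proof. by case: HdA => _ [_ [_ h]]. Qed.

Lemma dist_refl a : dA a a = 0.
Proof. by case: HdA => _ [h _]; apply/h. Qed.

Lemma dist_le0_eq a b : dA a b <= 0 -> a = b.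
Proof.
move=> h; case: HdA => _ [Heq _]; apply/Heq.
by apply: Rle_antisym h (dist_ge0 a b).
Qed.

Lemma mconv_unique s l l' : mconv dA s l -> mconv dA s l' -> l = l'.
Proof.
move=> hl hl'; apply: dist_le0_eq; apply: le_eps => e he.
have [M HM] := hl (e / 2) ltac:(lra); have [M' HM'] := hl' (e / 2) ltac:(lra).
have := HM (maxn M M') (leq_maxl _ _); have := HM' (maxn M M') (leq_maxr _ _).
have := dist_tri l (s (maxn M M')) l'; rewrite (dist_sym l (s _)); lra.
Qed.

Lemma mconv_shift s l : mconv dA s l -> mconv dA (fun n => s n.+1) l.
Proof. by move=> hl e he; have [M HM] := hl e he; exists M => n hn; apply: HM; apply: leqW. Qed.

End MetricFacts.

Record ordered_contraction (Z : Type) (D : Z -> Z -> R) (Rl : Z -> Z -> Prop)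
    (F : Z -> Z) (phi : R -> R) : Prop := {
  oc_metric : is_metric D;
  oc_phi : in_Phi phi;
  oc_refl : forall p, Rl p p;
  oc_trans : forall p q r, Rl p q -> Rl q r -> Rl p r;
  oc_mono : forall p q, Rl p q -> Rl (F p) (F q);
  oc_contr : forall p q, Rl p q -> D (F p) (F q) <= phi (D p q) }.

Section OrderedContraction.
Variables (Z : Type) (D : Z -> Z -> R) (Rl : Z -> Z -> Prop) (F : Z -> Z) (phi : R -> R).
Hypothesis HF : ordered_contraction D Rl F phi.

Let HD := oc_metric HF.
Let Hphi := oc_phi HF.

Lemma iter_fixed p : F p = p -> forall n, Nat.iter n F p = p.
Proof. by move=> hp; elim=> [|n IH] //=; rewrite IH. Qed.

Lemma iter_succ n p : Nat.iter n F (F p) = Nat.iter n.+1 F p.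
Proof. by elim: n => [|n IH] //=; rewrite IH. Qed.

Lemma contr_comparable p q : Rl p q \/ Rl q p -> D (F p) (F q) <= phi (D p q).
Proof.
case=> h; first exact: (oc_contr HF).
by rewrite (dist_sym HD) (dist_sym HD p); apply: (oc_contr HF).
Qed.

Lemma iter_contr n p q : Rl p q \/ Rl q p ->
  D (Nat.iter n F p) (Nat.iter n F q) <= Nat.iter n phi (D p q).
Proof.
move=> hpq; elim: n => [|n IH] /=; first exact: Rle_refl.
have hcmp : forall m, Rl (Nat.iter m F p) (Nat.iter m F q) \/ Rl (Nat.iter m F q) (Nat.iter m F p).
  by move=> m; case: hpq => h; [left | right]; elim: m => [|m IHm] //=; apply: (oc_mono HF).
apply: Rle_trans (contr_comparable (hcmp n)) _.
exact: (phi_mono Hphi (dist_ge0 HD _ _) IH).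
Qed.

Lemma orbit_mono p : Rl p (F p) -> forall m n, (m <= n)%nat ->
  Rl (Nat.iter m F p) (Nat.iter n F p).
Proof.
move=> hp m; elim=> [|n IH]; first by rewrite leqn0 => /eqP ->; apply: (oc_refl HF).
rewrite leq_eqVlt => /orP [/eqP -> | hlt]; first exact: (oc_refl HF).
apply: (oc_trans HF) (IH hlt) _; rewrite -iter_succ.
by elim: n {IH hlt} => [|n IHn] //=; apply: (oc_mono HF).
Qed.

(* Such an orbit is Cauchy: once a step D(x_M, x_{M+1}) is below
   e/3 - phi(e/3), all later iterates stay within e/3 of x_M. *)
Lemma orbit_cauchy p : Rl p (F p) -> mcauchy D (fun n => Nat.iter n F p).
Proof.
move=> hp e he.
have he3 : 0 < e / 3 by lra.
have hgap : 0 < e / 3 - phi (e / 3) by have := phi_lt Hphi he3; lra.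
have [M HM] := iter_phi_small Hphi (dist_ge0 HD p (F p)) hgap.
have hstep : D (Nat.iter M.+1 F p) (Nat.iter M F p) < e / 3 - phi (e / 3).
  rewrite (dist_sym HD) -iter_succ.
  exact: Rle_lt_trans (iter_contr M (or_introl hp)) (HM M (leqnn M)).
have hball : forall k, D (Nat.iter (k + M) F p) (Nat.iter M F p) <= e / 3.
  elim=> [|k IH]; first by rewrite add0n (dist_refl HD); lra.
  rewrite addSn /=; apply: Rle_trans (dist_tri HD _ (Nat.iter M.+1 F p) _) _.
  have hcmp : Rl (Nat.iter M F p) (Nat.iter (k + M) F p) := orbit_mono hp (leq_addl _ _).
  have := contr_comparable (or_intror hcmp); have := phi_mono Hphi (dist_ge0 HD _ _) IH.
  rewrite /= in hstep *; lra.
exists M => m n hm hn.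
apply: Rle_lt_trans (dist_tri HD _ (Nat.iter M F p) _) _.
rewrite -(subnK hm) -(subnK hn) (dist_sym HD _ (Nat.iter (n - M + M) F p)).
have := hball (m - M)%nat; have := hball (n - M)%nat; lra.
Qed.

Lemma limit_fixed p l : mconv D (fun n => Nat.iter n F p) l ->
  mconv D (fun n => F (Nat.iter n F p)) (F l) -> F l = l.
Proof. by move=> hl hFl; apply: (mconv_unique HD hFl (mconv_shift hl)). Qed.

Lemma contr_image_conv s l : (forall n, Rl (s n) l) -> mconv D s l ->
  mconv D (fun n => F (s n)) (F l).
Proof.
move=> hbelow hl e he; have [M HM] := hl e he; exists M => n hn.
apply: Rle_lt_trans (oc_contr HF (hbelow n)) _.
exact: Rle_lt_trans (phi_le Hphi (dist_ge0 HD _ _)) (HM n hn).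
Qed.

Lemma attraction ps q w : F ps = ps -> Rl q w -> Rl ps w ->
  mconv D (fun n => Nat.iter n F q) ps.
Proof.
move=> hfix hq hps e he.
have [M1 HM1] := iter_phi_small Hphi (dist_ge0 HD q w) (ltac:(lra) : 0 < e / 2).
have [M2 HM2] := iter_phi_small Hphi (dist_ge0 HD w ps) (ltac:(lra) : 0 < e / 2).
exists (maxn M1 M2) => n hn.
have h1 := iter_contr n (or_introl hq).
have h2 := iter_contr n (p := w) (q := ps) (or_intror hps).
rewrite (iter_fixed hfix) in h2.
have := HM1 n (leq_trans (leq_maxl _ _) hn); have := HM2 n (leq_trans (leq_maxr _ _) hn).
have := dist_tri HD (Nat.iter n F q) (Nat.iter n F w) ps; lra.
Qed.

Lemma directed_fixed_point ps : F ps = ps ->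
  (forall p q, exists w, Rl p w /\ Rl q w) ->
  (forall q, mconv D (fun n => Nat.iter n F q) ps) /\ (forall q, F q = q -> q = ps).
Proof.
move=> hfix hdir.
have hattr : forall q, mconv D (fun n => Nat.iter n F q) ps.
  by move=> q; have [w [hq hps]] := hdir q ps; apply: attraction hfix hq hps.
split=> // q hq.
have hconst : mconv D (fun n => Nat.iter n F q) q.
  by move=> e he; exists 0%nat => n _; rewrite (iter_fixed hq) (dist_refl HD).
exact: (mconv_unique HD hconst (hattr q)).
Qed.

End OrderedContraction.

Section CoupledSystem.
(* Declared without implicit arguments, so that [le j] and [d j] take the
   index j explicitly. *)
Unset Implicit Arguments.
Variables (N : nat) (X : 'I_N -> Type).
Variables (le : forall i, X i -> X i -> Prop) (d : forall i, X i -> X i -> R).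
Variables (T : forall i, prodX X -> X i) (eps : 'I_N -> 'I_N -> bool).
Set Implicit Arguments.

Local Notation pairX := (prodX X * prodX X)%type.

Lemma dmax_ge0 (x y : prodX X) : 0 <= dmax d x y.
Proof.
rewrite /dmax; elim: (enum 'I_N) => [|a s IH] /=; first lra.
exact: Rle_trans IH (Rmax_r _ _).
Qed.

Lemma dmax_ub (x y : prodX X) j : d j (x j) (y j) <= dmax d x y.
Proof.
have : j \in enum 'I_N by rewrite mem_enum.
rewrite /dmax; elim: (enum 'I_N) => [|a s IH] //=.
rewrite in_cons => /orP [/eqP -> | /IH h]; first exact: Rmax_l.
exact: Rle_trans h (Rmax_r _ _).
Qed.

Lemma dmax_lub (x y : prodX X) c : 0 <= c -> (forall j, d j (x j) (y j) <= c) -> dmax d x y <= c.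
Proof. by move=> hc h; rewrite /dmax; elim: (enum 'I_N) => [|a s IH] //=; apply: Rmax_lub. Qed.

Definition pair_le (p q : pairX) : Prop :=
  (forall j, le j (p.1 j) (q.1 j)) /\ (forall j, le j (q.2 j) (p.2 j)).

Definition pair_dist (p q : pairX) : R := Rmax (dmax d p.1 q.1) (dmax d p.2 q.2).

Definition coupled (p : pairX) : pairX :=
  (fun i => T i (sigmaS eps i p.1 p.2), fun i => T i (sigmaS eps i p.2 p.1)).

Lemma uv_seq_orbit u0 v0 : uv_seq T eps u0 v0 = fun n => Nat.iter n coupled (u0, v0).
Proof. by []. Qed.

Lemma pair_dist_fst p q j : d j (p.1 j) (q.1 j) <= pair_dist p q.
Proof. by apply: Rle_trans (Rmax_l _ _); apply: dmax_ub. Qed.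

Lemma pair_dist_snd p q j : d j (p.2 j) (q.2 j) <= pair_dist p q.
Proof. by apply: Rle_trans (Rmax_r _ _); apply: dmax_ub. Qed.

Lemma pair_dist_lub p q c : 0 <= c ->
  (forall j, d j (p.1 j) (q.1 j) <= c /\ d j (p.2 j) (q.2 j) <= c) -> pair_dist p q <= c.
Proof. by move=> hc h; apply: Rmax_lub; apply: dmax_lub => // j; case: (h j). Qed.

Lemma pair_dist_swap p q : pair_dist (p.2, p.1) (q.2, q.1) = pair_dist p q.
Proof. exact: Rmax_comm. Qed.

Lemma sigma_same i (z : prodX X) : sigmaS eps i z z = z.
Proof. by apply: functional_extensionality_dep => j; rewrite /sigmaS; case: (eps i j). Qed.

Lemma coupled_swap p : coupled (p.2, p.1) = ((coupled p).2, (coupled p).1).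
Proof. by []. Qed.

Lemma coupled_diag z : coupled (z, z) = (z, z) <-> forall i, z i = T i z.
Proof.
split=> [h i | h].
- by have := f_equal (fun p : pairX => p.1 i) h; rewrite /= sigma_same.
- rewrite /coupled /=; congr (_, _); apply: functional_extensionality_dep => i;
    by rewrite sigma_same (h i).
Qed.

Lemma mconv_pair (s : nat -> pairX) l : mconv pair_dist s l <->
  forall j, mconv (d j) (fun n => (s n).1 j) (l.1 j) /\ mconv (d j) (fun n => (s n).2 j) (l.2 j).
Proof.
split=> [hs j | hs e he].
  split=> e he; have [M HM] := hs e he; exists M => n hn; apply: Rle_lt_trans (HM n hn).
  + exact: pair_dist_fst.
  + exact: pair_dist_snd.
have hev : forall j, exists M : nat, forall n, (M <= n)%nat ->
    d j ((s n).1 j) (l.1 j) < e / 2 /\ d j ((s n).2 j) (l.2 j) < e / 2.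
  move=> j; have [h1 h2] := hs j.
  have [M1 HM1] := h1 (e / 2) ltac:(lra); have [M2 HM2] := h2 (e / 2) ltac:(lra).
  exists (maxn M1 M2) => n hn; split.
  + by apply: HM1; apply: leq_trans (leq_maxl _ _) hn.
  + by apply: HM2; apply: leq_trans (leq_maxr _ _) hn.
have [M HM] := eventually_all hev.
exists M => n hn; apply: (Rle_lt_trans _ (e / 2)); last lra.
apply: pair_dist_lub => [|j]; first lra.
by case: (HM j n hn) => h1 h2; split; apply: Rlt_le.
Qed.

Lemma pair_complete : (forall i, mcomplete (d i)) -> mcomplete pair_dist.
Proof.
move=> Hc s hs.
have hcauchy : forall j, mcauchy (d j) (fun n => (s n).1 j) /\ mcauchy (d j) (fun n => (s n).2 j).
  move=> j; split=> e he; have [M HM] := hs e he; exists M => m n hm hn;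
    apply: Rle_lt_trans (HM m n hm hn).
  + exact: pair_dist_fst.
  + exact: pair_dist_snd.
have [u hu] := dep_choice (P := fun j a => mconv (d j) (fun n => (s n).1 j) a)
  (fun j => Hc j _ (hcauchy j).1).
have [v hv] := dep_choice (P := fun j a => mconv (d j) (fun n => (s n).2 j) a)
  (fun j => Hc j _ (hcauchy j).2).
by exists (u, v); apply/mconv_pair => j; split; [apply: hu | apply: hv].
Qed.

Section Metric.
Hypothesis Hmet : forall i, is_metric (d i).

Lemma pair_dist_metric : is_metric pair_dist.
Proof.
have hge0 : forall p q, 0 <= pair_dist p q.
  by move=> p q; apply: Rle_trans (dmax_ge0 _ _) (Rmax_l _ _).
split; [exact: hge0 | split; [|split]].
- move=> [u v] [u' v']; split=> [h | [-> ->]].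
  + have hcomp : forall j, d j (u j) (u' j) <= 0 /\ d j (v j) (v' j) <= 0.
      by move=> j; rewrite -h; split; [exact: (pair_dist_fst (u, v) (u', v') j)
                                     | exact: (pair_dist_snd (u, v) (u', v') j)].
    congr (_, _); apply: functional_extensionality_dep => j; apply: (dist_le0_eq (Hmet j)).
    * exact: (hcomp j).1.
    * exact: (hcomp j).2.
  + apply: Rle_antisym (hge0 _ _); apply: pair_dist_lub; first lra.
    by move=> j; rewrite !(dist_refl (Hmet j)); lra.
- have hle : forall p q, pair_dist p q <= pair_dist q p.
    move=> p q; apply: pair_dist_lub (hge0 _ _) _ => j.
    rewrite !(dist_sym (Hmet j) (p.1 j)) !(dist_sym (Hmet j) (p.2 j)).
    by split; [apply: pair_dist_fst | apply: pair_dist_snd].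
  by move=> p q; apply: Rle_antisym; apply: hle.
- move=> p q r; apply: pair_dist_lub => [|j]; first by have := hge0 p q; have := hge0 q r; lra.
  have t1 := dist_tri (Hmet j) (p.1 j) (q.1 j) (r.1 j); have t2 := dist_tri (Hmet j) (p.2 j) (q.2 j) (r.2 j).
  split.
  + apply: Rle_trans t1 _; apply: Rplus_le_compat; exact: pair_dist_fst.
  + apply: Rle_trans t2 _; apply: Rplus_le_compat; exact: pair_dist_snd.
Qed.

Lemma T_sigma_conv i s l : prod_continuous d (T i) -> mconv pair_dist s l ->
  mconv (d i) (fun n => T i (sigmaS eps i (s n).1 (s n).2)) (T i (sigmaS eps i l.1 l.2)).
Proof.
move=> Hc hs e he; have [delta [hdel Hdel]] := Hc (sigmaS eps i l.1 l.2) e he.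
have [M HM] := hs delta hdel; exists M => n hn; rewrite (dist_sym (Hmet i)); apply: Hdel => j.
rewrite /sigmaS (dist_sym (Hmet j)); apply: Rle_lt_trans (HM n hn).
by case: (eps i j); [apply: pair_dist_fst | apply: pair_dist_snd].
Qed.

Lemma coupled_continuous s l : (forall i, prod_continuous d (T i)) ->
  mconv pair_dist s l -> mconv pair_dist (fun n => coupled (s n)) (coupled l).
Proof.
move=> Hc hs; apply/mconv_pair => j; split; first exact: T_sigma_conv.
have hswap : mconv pair_dist (fun n => ((s n).2, (s n).1)) (l.2, l.1).
  by move=> e he; have [M HM] := hs e he; exists M => n hn; rewrite pair_dist_swap; apply: HM.
exact: T_sigma_conv (Hc j) hswap.
Qed.

End Metric.

Section Order.
Hypothesis Hpo : forall i, is_partial_order (le i).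
Hypothesis Hmono : partially_monotone le T eps.

(* [mix x y k] agrees with y on the coordinates below k and with x on the
   others; it moves from x to y one coordinate at a time. *)
Definition mix (x y : prodX X) (k : nat) : prodX X :=
  fun j => if (j < k)%nat then y j else x j.

Lemma mix_step i x y k : prec le eps i x y ->
  le i (T i (mix x y k)) (T i (mix x y k.+1)).
Proof.
move=> hxy; case: (Hpo i) => hrefl _.
case: (ltnP k N) => hk; last first.
  have -> : mix x y k.+1 = mix x y k; last exact: hrefl.
  apply: functional_extensionality_dep => j; rewrite /mix.
  by rewrite (leq_trans (ltn_ord j) hk) (leq_trans (ltn_ord j) (leqW hk)).
pose jk := Ordinal hk.
have hother : forall j, j <> jk -> mix x y k j = mix x y k.+1 j.
  move=> j hj; rewrite /mix ltnS (leq_eqVlt j); case: eqP => // e.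
  by case: hj; apply: val_inj.
have E1 : mix x y k jk = x jk by rewrite /mix /= ltnn.
have E2 : mix x y k.+1 jk = y jk by rewrite /mix /= ltnSn.
have := Hmono i hother; have := Hmono i (fun j hj => esym (hother j hj)).
have := hxy jk; rewrite E1 E2; by case: (eps i jk) => hj h1 h2; [apply: h2 | apply: h1].
Qed.

Lemma T_mono i x y : prec le eps i x y -> le i (T i x) (T i y).
Proof.
move=> hxy; case: (Hpo i) => hrefl [htrans _].
have hx : mix x y 0 = x by apply: functional_extensionality_dep.
have hy : mix x y N = y by apply: functional_extensionality_dep => j; rewrite /mix ltn_ord.
suff : forall k, le i (T i x) (T i (mix x y k)) by rewrite -{2}hy; apply.
elim=> [|k IH]; first by rewrite hx.
exact: htrans IH (mix_step k hxy).
Qed.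

Lemma sigma_prec i p q : pair_le p q ->
  prec le eps i (sigmaS eps i p.1 p.2) (sigmaS eps i q.1 q.2) /\
  prec le eps i (sigmaS eps i q.2 q.1) (sigmaS eps i p.2 p.1).
Proof. by case=> h1 h2; split=> j; rewrite /sigmaS; case: (eps i j). Qed.

Lemma coupled_mono p q : pair_le p q -> pair_le (coupled p) (coupled q).
Proof. by move=> hpq; split=> i; apply: T_mono; case: (sigma_prec i hpq). Qed.

Lemma pair_le_limit :
  (forall i (s : nat -> X i) (l : X i),
     (forall n, le i (s n) (s (S n))) -> mconv (d i) s l -> forall n, le i (s n) l) ->
  (forall i (s : nat -> X i) (l : X i),
     (forall n, le i (s (S n)) (s n)) -> mconv (d i) s l -> forall n, le i l (s n)) ->
  forall (s : nat -> pairX) l, (forall n, pair_le (s n) (s n.+1)) ->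
    mconv pair_dist s l -> forall n, pair_le (s n) l.
Proof.
move=> Hup Hdown s l hs /mconv_pair hl n; split=> j.
- by apply: (Hup j (fun n => (s n).1 j)); [move=> m; case: (hs m) | case: (hl j)].
- by apply: (Hdown j (fun n => (s n).2 j)); [move=> m; case: (hs m) | case: (hl j)].
Qed.

Lemma pair_directed : (forall i, bi_directed (le i)) ->
  forall p q, exists w, pair_le p w /\ pair_le q w.
Proof.
move=> Hbd p q.
have [u hu] := dep_choice (P := fun j a => le j (p.1 j) a /\ le j (q.1 j) a)
  (fun j => (Hbd j (p.1 j) (q.1 j)).2).
have [v hv] := dep_choice (P := fun j a => le j a (p.2 j) /\ le j a (q.2 j))
  (fun j => (Hbd j (p.2 j) (q.2 j)).1).
by exists (u, v); split; split=> j; [case: (hu j) | case: (hv j) | case: (hu j) | case: (hv j)].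
Qed.

Lemma coupled_ordered_contraction phi : (forall i, is_metric (d i)) -> in_Phi phi ->
  (forall i (x y : prodX X), prec le eps i x y -> d i (T i x) (T i y) <= phi (dmax d x y)) ->
  ordered_contraction pair_dist pair_le coupled phi.
Proof.
move=> Hmet Hphi Hcontr; split=> //.
- exact: pair_dist_metric.
- by move=> p; split=> j; case: (Hpo j).
- move=> p q r [h1 h2] [h3 h4]; split=> j; case: (Hpo j) => _ [htr _].
  + exact: htr (h1 j) (h3 j).
  + exact: htr (h4 j) (h2 j).
- exact: coupled_mono.
- move=> p q hpq.
  have hdist_ge0 : 0 <= pair_dist p q := dist_ge0 (pair_dist_metric Hmet) p q.
  have hsig : forall i x y x' y', (forall j, d j (x j) (x' j) <= pair_dist p q) ->
      (forall j, d j (y j) (y' j) <= pair_dist p q) ->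
      phi (dmax d (sigmaS eps i x y) (sigmaS eps i x' y')) <= phi (pair_dist p q).
    move=> i x y x' y' hx hy; apply: (phi_mono Hphi (dmax_ge0 _ _)).
    apply: dmax_lub => [|j]; first exact: hdist_ge0.
    by rewrite /sigmaS; case: (eps i j).
  apply: pair_dist_lub => [|i]; first exact: (phi_ge0 Hphi hdist_ge0).
  have [hp1 hp2] := sigma_prec i hpq; split.
  + apply: Rle_trans (Hcontr _ _ _ hp1) _.
    by apply: hsig => j; [apply: pair_dist_fst | apply: pair_dist_snd].
  + rewrite (dist_sym (Hmet i)); apply: Rle_trans (Hcontr _ _ _ hp2) _.
    by apply: hsig => j; rewrite (dist_sym (Hmet j)); [apply: pair_dist_snd | apply: pair_dist_fst].
Qed.

End Order.

End CoupledSystem.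

Theorem theorem5
  (N : nat) (HN : (2 <= N)%nat)
  (X : 'I_N -> Type)
  (le : forall i, X i -> X i -> Prop)
  (d : forall i, X i -> X i -> R)
  (T : forall i, prodX X -> X i)
  (eps : 'I_N -> 'I_N -> bool)
  (Hpo : forall i, is_partial_order (le i))
  (Hbd : forall i, bi_directed (le i))
  (Hmet : forall i, is_metric (d i))
  (Hcomp : forall i, mcomplete (d i))
  (Hmono : partially_monotone le T eps)
  (phi : R -> R) (Hphi : in_Phi phi)
  (Hcontr : forall i (x y : prodX X), prec le eps i x y ->
      d i (T i x) (T i y) <= phi (dmax d x y))
  (Hd : (forall i : 'I_N, prod_continuous d (T i)) \/
        (forall i (s : nat -> X i) (l : X i),
           (forall n, le i (s n) (s (S n))) -> mconv (d i) s l -> forall n, le i (s n) l) /\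
        (forall i (s : nat -> X i) (l : X i),
           (forall n, le i (s (S n)) (s n)) -> mconv (d i) s l -> forall n, le i l (s n)))
  (x0 y0 : prodX X)
  (Hx0 : forall i, le i (x0 i) (T i (sigmaS eps i x0 y0)))
  (Hy0 : forall i, le i (T i (sigmaS eps i y0 x0)) (y0 i)) :
  exists xs : prodX X,
    (forall i, xs i = T i xs) /\
    (forall z : prodX X, (forall i, z i = T i z) -> z = xs) /\
    (forall u0 v0 : prodX X, forall i,
       mconv (d i) (fun n => (uv_seq T eps u0 v0 n).1 i) (xs i) /\
       mconv (d i) (fun n => (uv_seq T eps u0 v0 n).2 i) (xs i)).
Proof.
have HG := coupled_ordered_contraction Hpo Hmono Hmet Hphi Hcontr.
have hp0 : pair_le le (x0, y0) (coupled T eps (x0, y0)) by split.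
have [[u v] hl] := pair_complete Hcomp (orbit_cauchy HG hp0).
have hfix : coupled T eps (u, v) = (u, v).
  apply: (limit_fixed HG hl); case: Hd => [Hc | [Hup Hdown]].
  - exact: (coupled_continuous eps Hmet Hc hl).
  - have hbelow := pair_le_limit Hup Hdown (fun n => orbit_mono HG hp0 (leqnSn n)) hl.
    exact: (contr_image_conv HG hbelow hl).
have [hattr huniq] := directed_fixed_point HG hfix (pair_directed Hbd).
have [hvu _] : (v, u) = (u, v).
  by apply: huniq; rewrite (coupled_swap T eps (u, v)) hfix.
subst v; exists u; split; [|split].
- exact/(coupled_diag T eps).
- by move=> z /(coupled_diag T eps) /huniq [].
- by move=> u0 v0; rewrite uv_seq_orbit; apply/(mconv_pair d _ (u, u)).
Qed.
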